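(* Let $\mathbf{p},\mathbf{q},\lambda,\mu,\bar d,\bar w$, $q\in(0,1)$, the random variable $X$ and the quantities $p^{(E)}$ be as in the context. Let $0<x\le\bar d\bar w$ and let $\sigma_x=\big((w_i,x_{i1},\dots,x_{i\ell_i})\big)_{1\le i\le d-1}$ be a configuration starting from $x$ that occurs with positive probability. Let $(y_{ij})_{1\le i\le d-1,\,1\le j\le\ell_i}$ be integers such that $y_{ij}\le x_{ij}$ and $\mathbb{P}(X=y_{ij})>0$ for all $i,j$. Let $\sigma'_x=\big((w_i,y'_{i1},\dots,y'_{i\ell_i})\big)_{1\le i\le d-1}$, where for each $i$, $(y'_{i1}\le\dots\le y'_{i\ell_i})$ is the nondecreasing rearrangement of $(y_{i1},\dots,y_{i\ell_i})$. Then $\sigma'_x$ is a configuration starting from $x$ that occurs with positive probability.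
   Context: Standing assumptions: $\mathbf{p}=(p_d)_{d\ge0}$, $\mathbf{q}=(q_w)_{w\ge0}$ are probability distributions on nonnegative integers with $\lambda=\sum_d dp_d\in(0,\infty)$, $\mu=\sum_w wq_w\in(0,\infty)$, $p_d=0$ for $d>\bar d$, $q_w=0$ for $w>\bar w$ (integers $\bar d,\bar w\ge1$), $p_0=q_0=q_1=0$. $X$ is the random variable with $\mathbb{P}(X=k)=\sum_{d=1}^{\bar d}\frac{dp_d}{\lambda}\sum_{(w_1-1)+\dots+(w_{d-1}-1)=k}\frac{\prod_{j=1}^{d-1}w_jq_{w_j}}{\mu^{d-1}}$ (sum over positive integers $w_j$). $p^{(E)}(\ell,x_1,\dots,x_\ell\mid w)=\mathbb{P}(L=\ell,X_{(1)}=x_1,\dots,X_{(\ell)}=x_\ell)$ for $0\le\ell\le w-1$, $x_1\le\dots\le x_\ell$, where: a clique of size $w$ has an initially active vertex $u$ and initially inactive vertices $1,\dots,w-1$; vertex $i$ has $X_i$ further neighbors outside the clique which are inactive and remain inactive (so its degree is $X_i+w-1$), with $X_1,\dots,X_{w-1}$ i.i.d. copies of $X$; in discrete time an inactive vertex becomes active once its proportion of active neighbors is strictly greater than $q$, active vertices staying active; $L$ is the final number of active vertices among $1,\dots,w-1$, and $X_{(1)}\le\dots\le X_{(w-1)}$ the order statistics of the $X_i$. A configuration starting from $x$ is an element $\sigma_x=\big((w_i,x_{i1},\dots,x_{i\ell_i})\big)_{1\le i\le d-1}$ with $1\le d\le\bar d$, $2\le w_i\le\bar w$, $0\le\ell_i\le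 w_i-1$ and $0\le x_{i1}\le\dots\le x_{i\ell_i}\le\bar d\bar w$. It occurs with positive probability if $p_d>0$, $\sum_{i=1}^{d-1}(w_i-1)=x$, and $q_{w_i}>0$ and $p^{(E)}(\ell_i,x_{i1},\dots,x_{i\ell_i}\mid w_i)>0$ for all $1\le i\le d-1$. *)

From mathcomp Require Import all_boot all_order all_algebra.
Set Implicit Arguments. Unset Strict Implicit. Unset Printing Implicit Defensive.
Import Order.TTheory GRing.Theory Num.Theory.
Local Open Scope ring_scope.

Section Defs.
Variable R : realFieldType.

(* lambda = sum_d d p_d  (p_d = 0 for d > dbar) *)
Definition lam (p : nat -> R) (dbar : nat) : R :=
  \sum_(d < dbar.+1) (d%:R * p d).
(* mu = sum_w w q_w  (q_w = 0 for w > wbar) *)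
Definition mu (q : nat -> R) (wbar : nat) : R :=
  \sum_(w < wbar.+1) (w%:R * q w).

(* P(X = k).  The inner sum runs over positive integers w_1..w_{d-1}
   with (w_1-1)+...+(w_{d-1}-1) = k; we write w_j = ws j + 1 with
   ws j in {0..k} (which loses no term, since w_j - 1 <= k). *)
Definition PX (p q : nat -> R) (dbar wbar : nat) (k : nat) : R :=
  \sum_(1 <= d < dbar.+1)
    (d%:R * p d / lam p dbar) *
    \sum_(ws : {ffun 'I_d.-1 -> 'I_k.+1} | \sum_(j < d.-1) (ws j : nat) == k)
      ((\prod_(j < d.-1) ((ws j).+1%:R * q (ws j).+1)) / (mu q wbar) ^+ d.-1).

(* One step of the threshold dynamics in a clique of size w:
   vertex u is active (not indexed), vertices 'I_(w-1) are the others;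
   vertex i has degree X i + w - 1; an inactive vertex becomes active when
   (number of active neighbours) / degree > th; the active neighbours of an
   inactive vertex i are u and the vertices of A. *)
Definition clique_step (th : R) (w : nat) (X : 'I_w.-1 -> nat)
  (A : {set 'I_w.-1}) : {set 'I_w.-1} :=
  A :|: [set i | th < (1 + #|A|)%:R / (X i + w.-1)%:R].

(* Final set of active vertices among 1..w-1: the (monotone) process started
   from the empty set, iterated #|'I_(w-1)| times, after which it is stable. *)
Definition clique_final (th : R) (w : nat) (X : 'I_w.-1 -> nat) : {set 'I_w.-1} :=
  fixset (clique_step th X).

(* p^(E)(l, xs | w) = P(L = l, X_(1) = xs_1, ..., X_(l) = xs_l),
   X_1..X_(w-1) i.i.d. with law PX.  X <= (dbar-1)(wbar-1) < dbar*wbar,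
   so summing over values in {0..dbar*wbar} is exact. *)
Definition pE (p q : nat -> R) (dbar wbar : nat) (th : R)
  (l : nat) (xs : seq nat) (w : nat) : R :=
  \sum_(X : {ffun 'I_w.-1 -> 'I_(dbar * wbar).+1})
    (\prod_(i < w.-1) PX p q dbar wbar (X i)) *
    (([&& #|clique_final th (fun i => (X i : nat))| == l &
         take l (sort leq [seq (X i : nat) | i <- enum 'I_w.-1]) == xs])%:R).

(* A configuration ((w_i, x_i1..x_il_i))_{1<=i<=d-1} is a list of length d-1
   of pairs (w_i, [x_i1; ...; x_il_i]). *)
Definition is_config (dbar wbar : nat) (s : seq (nat * seq nat)) : Prop :=
  (1 <= (size s).+1 <= dbar)%N /\
  forall c, c \in s ->
    [/\ (2 <= c.1 <= wbar)%N, (size c.2 <= c.1 - 1)%N,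
        sorted leq c.2 & all (fun y => y <= dbar * wbar)%N c.2].

Definition occurs_pos (p q : nat -> R) (dbar wbar : nat) (th : R)
  (x : nat) (s : seq (nat * seq nat)) : Prop :=
  is_config dbar wbar s /\
  [/\ 0 < p (size s).+1,
      (\sum_(c <- s) (c.1 - 1))%N = x &
      forall c, c \in s -> 0 < q c.1 /\ 0 < pE p q dbar wbar th (size c.2) c.2 c.1].

End Defs.

(* If the configuration sigma_x occurs, some realisation X of the outside
   degrees of clique i shows the l_i smallest values x_i1..x_il_i on its final
   active set S.  Lowering the values on S to the y_ij (in the order of the
   x_ij) keeps S final: lowering degrees can only enlarge the final set, and
   since S is a fixed point of the dynamics for every realisation that agrees
   with X outside S, it cannot grow either.  The lowered values on S stay
   below the unchanged values off S, so the new realisation observes exactly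
   the sorted y_ij, with positive probability. *)
From mathcomp Require Import all_boot all_order all_algebra.

Set Implicit Arguments.
Unset Strict Implicit.
Unset Printing Implicit Defensive.
Import Order.TTheory GRing.Theory Num.Theory.
Local Open Scope ring_scope.

Lemma ler_ratio_nat (R : realFieldType) (a a' b c : nat) :
  (a <= a')%N -> (c <= b)%N -> (0 < c)%N -> (a%:R / b%:R : R) <= a'%:R / c%:R.
Proof.
move=> le_aa' le_cb c_gt0; have b_gt0 : (0 < b)%N := leq_trans c_gt0 le_cb.
apply: (@le_trans _ _ (a'%:R / b%:R)).
  by apply: ler_wpM2r; [rewrite invr_ge0 ler0n | rewrite ler_nat].
by apply: ler_wpM2l; [exact: ler0n | rewrite lef_pV2 ?ler_nat ?posrE ?ltr0n].
Qed.

Lemma sort_cat_le (s1 s2 : seq nat) : {in s1 & s2, forall a b, (a <= b)%N} ->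
  sort leq (s1 ++ s2) = sort leq s1 ++ sort leq s2.
Proof.
move=> le_s1s2; apply: (sorted_eq leq_trans anti_leq (sort_sorted leq_total _)).
  rewrite sorted_pairwise ?pairwise_cat; last exact: leq_trans.
  rewrite -!sorted_pairwise ?(sort_sorted leq_total) ?andbT //; try exact: leq_trans.
  by apply/allrelP => a b; rewrite !mem_sort; apply: le_s1s2.
by rewrite perm_sort perm_sym perm_cat ?perm_sort.
Qed.

Lemma sort_map_enum_setC (T : finType) (S : {set T}) (g : T -> nat) :
  {in S & ~: S, forall i j, (g i <= g j)%N} ->
  sort leq [seq g i | i <- enum T] =
    sort leq [seq g i | i <- enum S] ++ sort leq [seq g i | i <- enum (~: S)].
Proof.
move=> le_SC; rewrite -sort_cat_le; last first.
  by move=> _ _ /mapP[i + ->] /mapP[j + ->]; rewrite !mem_enum; apply: le_SC.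
apply/(perm_sortP leq_total leq_trans anti_leq); rewrite -map_cat perm_map //.
rewrite /enum_mem -enumT (@eq_filter _ _ predT) ?filter_predT //.
rewrite -(perm_filterC (mem S)) perm_cat2l (@eq_filter _ _ (predC (mem S))) //.
by move=> i; rewrite !inE.
Qed.

Lemma exists_lower_perm (T : finType) (S : {set T}) (f : T -> nat) (ys : seq nat) :
  size ys = #|S| ->
  (forall k, (k < size ys)%N ->
     (nth 0%N ys k <= nth 0%N (sort leq [seq f i | i <- enum S]) k)%N) ->
  exists g : T -> nat, [/\ forall i, (g i <= f i)%N,
    forall i, i \notin S -> g i = f i & perm_eq [seq g i | i <- enum S] ys].
Proof.
move=> size_ys le_ys.
pose e := sort (relpre f leq) (enum S).
have fe : [seq f i | i <- e] = sort leq [seq f i | i <- enum S] by rewrite sort_map.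
have size_e : size e = size ys by rewrite size_sort -cardE.
have mem_e i : (i \in e) = (i \in S) by rewrite mem_sort mem_enum.
pose g i := if i \in S then nth 0%N ys (index i e) else f i.
exists g; split=> [i | i /negbTE iS | ].
- rewrite /g; case: ifP => iS //; have ie : i \in e by rewrite mem_e.
  have lt_ie : (index i e < size ys)%N by rewrite -size_e index_mem.
  by apply: leq_trans (le_ys _ lt_ie) _; rewrite -fe (nth_map i) ?nth_index ?size_e.
- by rewrite /g iS.
- have ge : [seq g i | i <- e] = ys.
    apply: (@eq_from_nth _ 0%N); rewrite size_map // => k lt_ke.
    have i0 : T by case: (e) lt_ke => [|i].
    have eS : nth i0 e k \in S by rewrite -mem_e mem_nth.
    by rewrite (nth_map i0) // /g eS index_uniq // sort_uniq enum_uniq.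
  by rewrite -ge perm_map // perm_sym perm_sort.
Qed.

Section CliqueDynamics.
Variables (R : realFieldType) (th : R) (w : nat).
Implicit Types (f g : 'I_w.-1 -> nat) (A B : {set 'I_w.-1}).

Let w1_gt0 (i : 'I_w.-1) : (0 < w.-1)%N. Proof. exact: leq_ltn_trans (ltn_ord i). Qed.

Lemma clique_step_sub f g A B : (forall i, (g i <= f i)%N) -> A \subset B ->
  clique_step th f A \subset clique_step th g B.
Proof.
move=> le_gf sAB; apply/subsetP => i; rewrite !inE.
case/orP=> [/(subsetP sAB) -> // | lt_th]; apply/orP; right.
apply: (lt_le_trans lt_th); apply: ler_ratio_nat.
- by rewrite ltnS subset_leq_card.
- by rewrite leq_add2r.
- by rewrite addn_gt0 (w1_gt0 i) orbT.
Qed.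

Lemma clique_final_sub f g : (forall i, (g i <= f i)%N) ->
  clique_final th f \subset clique_final th g.
Proof.
move=> le_gf; rewrite /clique_final /fixset.
by elim: #|_| => [|k IHk] //=; apply: clique_step_sub.
Qed.

Lemma eq_clique_final f g : f =1 g -> clique_final th f = clique_final th g.
Proof.
by move=> fg; apply/eqP; rewrite eqEsubset !clique_final_sub // => i; rewrite fg.
Qed.

Lemma clique_final_lt f i j :
  i \in clique_final th f -> j \notin clique_final th f -> (f i < f j)%N.
Proof.
move=> iS; rewrite ltnNge; apply: contra => le_ji; move: iS.
rewrite /clique_final /fixset; elim: #|_| => [|k IHk] /=; first by rewrite inE.
rewrite !inE => /orP[/IHk -> // | lt_th]; apply/orP; right.
apply: (lt_le_trans lt_th); apply: ler_ratio_nat => //.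
- by rewrite leq_add2r.
- by rewrite addn_gt0 (w1_gt0 i) orbT.
Qed.

(* The final set of f is a prefixed point of the step for g, hence contains
   the least fixed point of that step. *)
Lemma clique_final_agree f g :
  (forall i, i \notin clique_final th f -> g i = f i) ->
  clique_final th g \subset clique_final th f.
Proof.
move=> gf; set S := clique_final th f.
have step_S : clique_step th g S \subset S.
  apply/subsetP => i; rewrite !inE => /orP[// | lt_th]; apply: contraT => iS.
  have : i \in clique_step th f S by rewrite !inE -gf // lt_th orbT.
  by rewrite fixsetK ?(negbTE iS) // => A B; apply: clique_step_sub.
rewrite /clique_final {1}/fixset; elim: #|_| => [|k IHk] /=; first exact: sub0set.
by apply: subset_trans step_S; apply: clique_step_sub.
Qed.

Lemma take_sort_clique_final f :
  take #|clique_final th f| (sort leq [seq f i | i <- enum 'I_w.-1]) =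
  sort leq [seq f i | i <- enum (clique_final th f)].
Proof.
rewrite (@sort_map_enum_setC _ (clique_final th f)).
  by rewrite take_size_cat // size_sort size_map -cardE.
by move=> i j iS; rewrite inE => jS; apply/ltnW/clique_final_lt.
Qed.

End CliqueDynamics.

Section PositiveProbability.
Variables (R : realFieldType) (p q : nat -> R) (dbar wbar : nat) (th : R).
Hypotheses (p_ge0 : forall d, 0 <= p d) (q_ge0 : forall w, 0 <= q w).

Lemma PX_ge0 k : 0 <= PX p q dbar wbar k.
Proof.
have lam_ge0 : 0 <= lam p dbar by apply: sumr_ge0 => d _; rewrite mulr_ge0.
have mu_ge0 : 0 <= mu q wbar by apply: sumr_ge0 => d _; rewrite mulr_ge0.
apply: sumr_ge0 => d _; rewrite mulr_ge0 ?divr_ge0 ?mulr_ge0 //.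
apply: sumr_ge0 => ws _; rewrite divr_ge0 ?exprn_ge0 //.
by apply: prodr_ge0 => j _; rewrite mulr_ge0.
Qed.

Lemma pE_gt0P w l xs :
  0 < pE p q dbar wbar th l xs w <->
  exists f : 'I_w.-1 -> nat, [/\ forall i, (f i <= dbar * wbar)%N,
    forall i, 0 < PX p q dbar wbar (f i),
    #|clique_final th f| = l &
    take l (sort leq [seq f i | i <- enum 'I_w.-1]) = xs].
Proof.
have term_ge0 (X : {ffun 'I_w.-1 -> 'I_(dbar * wbar).+1}) (b : bool) :
    0 <= (\prod_(i < w.-1) PX p q dbar wbar (X i)) * b%:R.
  by rewrite mulr_ge0 ?prodr_ge0 // => i _; apply: PX_ge0.
split=> [pE_gt0 | [f [f_le PX_gt0 card_S take_xs]]].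
  have /psumr_neq0P : pE p q dbar wbar th l xs w <> 0 by move/eqP; rewrite gt_eqF.
  case=> [X _ | X /andP[_]]; first exact: term_ge0.
  case: andP => [[/eqP card_S /eqP take_xs] | _]; last by rewrite mulr0 ltxx.
  rewrite mulr1 => /lt0r_neq0/prodf_neq0 PX_neq0.
  exists (fun i => X i : nat); split=> // i; first by rewrite -ltnS.
  by rewrite lt_def PX_neq0 ?PX_ge0.
pose X : {ffun 'I_w.-1 -> 'I_(dbar * wbar).+1} := [ffun i => inord (f i)].
have Xf : (fun i => X i : nat) =1 f by move=> i; rewrite ffunE inordK ?ltnS.
rewrite /pE (bigD1 X) //= ltr_wpDr ?sumr_ge0 //.
rewrite (eq_clique_final th Xf) (eq_map Xf) card_S take_xs !eqxx mulr1.
by apply: prodr_gt0 => i _; rewrite Xf.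
Qed.

Lemma pE_gt0_lower w xs ys :
  0 < pE p q dbar wbar th (size xs) xs w -> size ys = size xs ->
  (forall j, (j < size ys)%N ->
     (nth 0%N ys j <= nth 0%N xs j)%N /\ 0 < PX p q dbar wbar (nth 0%N ys j)) ->
  0 < pE p q dbar wbar th (size (sort leq ys)) (sort leq ys) w.
Proof.
case/pE_gt0P=> f [f_le PX_f card_S take_xs] size_ys le_ys.
set S := clique_final th f in card_S.
have xsE : xs = sort leq [seq f i | i <- enum S].
  by rewrite -take_xs -card_S take_sort_clique_final.
have [|k /le_ys[] |g [le_gf gf perm_gys]] := @exists_lower_perm _ S f ys.
- by rewrite size_ys card_S.
- by rewrite -xsE.
have gS : clique_final th g = S.
  by apply/eqP; rewrite eqEsubset clique_final_agree ?clique_final_sub.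
apply/pE_gt0P; exists g; split=> [i | i | |].
- exact: leq_trans (le_gf i) (f_le i).
- case: (boolP (i \in S)) => [iS | /gf ->] //.
  have : g i \in ys by rewrite -(perm_mem perm_gys) map_f ?mem_enum.
  by case/(nthP 0%N) => j /le_ys[_ +] <-.
- by rewrite gS card_S size_sort size_ys.
- rewrite size_sort size_ys -card_S -gS take_sort_clique_final gS.
  exact/(perm_sortP leq_total leq_trans anti_leq).
Qed.

End PositiveProbability.

Theorem lemma3 (R : realFieldType) (p q : nat -> R) (dbar wbar : nat) (th : R)
  (Hdbar : (1 <= dbar)%N) (Hwbar : (1 <= wbar)%N)
  (Hp0 : forall d, 0 <= p d) (Hp1 : \sum_(d < dbar.+1) p d = 1)
  (Hpsupp : forall d, (dbar < d)%N -> p d = 0) (Hpz : p 0%N = 0)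
  (Hq0 : forall w, 0 <= q w) (Hq1 : \sum_(w < wbar.+1) q w = 1)
  (Hqsupp : forall w, (wbar < w)%N -> q w = 0) (Hqz : q 0%N = 0) (Hqo : q 1%N = 0)
  (Hth : 0 < th < 1)
  (x : nat) (Hx : (0 < x <= dbar * wbar)%N)
  (s : seq (nat * seq nat)) (Hs : occurs_pos p q dbar wbar th x s)
  (ys : seq (seq nat)) (Hsize : size ys = size s)
  (Hys : forall i, (i < size s)%N ->
     size (nth [::] ys i) = size (nth (0%N, [::]) s i).2 /\
     forall j, (j < size (nth [::] ys i))%N ->
       (nth 0%N (nth [::] ys i) j <= nth 0%N (nth (0%N, [::]) s i).2 j)%N /\
       0 < PX p q dbar wbar (nth 0%N (nth [::] ys i) j)) :
  occurs_pos p q dbar wbar th x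
    [seq (cy.1.1, sort leq cy.2) | cy <- zip s ys].
Proof.
case: Hs => [[size_s config_s] [p_gt0 sum_s occ_s]].
set s' := [seq _ | cy <- zip s ys].
have size_s' : size s' = size s by rewrite size_map size_zip Hsize minnn.
have mem_s' c : c \in s' -> exists2 i, (i < size s)%N &
    c = ((nth (0%N, [::]) s i).1, sort leq (nth [::] ys i)).
  case/(nthP (0%N, [::])) => i; rewrite size_s' => lt_is <-; exists i => //.
  by rewrite (nth_map ((0%N, [::]), [::])) ?nth_zip ?size_zip ?Hsize ?minnn.
have fst_s' : [seq c.1 | c <- s'] = [seq c.1 | c <- s].
  transitivity [seq c.1 | c <- unzip1 (zip s ys)]; first by rewrite /s' -!map_comp.
  by rewrite unzip1_zip ?Hsize.
split; [split | split]; rewrite ?size_s' //.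
- move=> _ /mem_s'[i lt_is ->] /=.
  have [w_range size_x sorted_x x_le] := config_s _ (mem_nth (0%N, [::]) lt_is).
  have [size_y y_le] := Hys i lt_is.
  split; rewrite ?size_sort ?size_y ?sort_sorted //.
  apply/allP => y; rewrite mem_sort => /(nthP 0%N)[j lt_j <-].
  by apply: leq_trans (y_le j lt_j).1 _; apply/(allP x_le)/mem_nth; rewrite -size_y.
- by rewrite -sum_s -(big_map fst xpredT (fun a => a - 1)%N) fst_s' big_map.
- move=> _ /mem_s'[i lt_is ->] /=.
  have [q_gt0 pE_gt0] := occ_s _ (mem_nth (0%N, [::]) lt_is).
  have [size_y y_le] := Hys i lt_is.
  split=> //; exact: (pE_gt0_lower Hp0 Hq0 pE_gt0 size_y y_le).
Qed.
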